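(* Let $T$ be a monoid and $Y$ a semilattice, and let $\cdot$ be a left partial action of $T$ on $Y$ satisfying axioms (A), (B), (C), with corresponding map $\varphi\colon T\to\mathcal{I}(Y)$, $t\mapsto\varphi_t$. The following are equivalent: (1) $M(T,Y)$ is an $F$-restriction monoid; (2) $\mathrm{dom}(\varphi_t)$ is a principal order ideal of $Y$ for every $t\in T$; (3) the image of $\varphi$ is contained in the Munn semigroup $T_Y$ of $Y$.
   Context: A left partial action of $T$ on $Y$ is a partial map $(t,y)\mapsto t\cdot y$ with $1\cdot y=y$ always defined and such that if $t\cdot y$ and $s\cdot(t\cdot y)$ are defined then $(st)\cdot y$ is defined and equals $s\cdot(t\cdot y)$. $\varphi_t$ is the partial injection $y\mapsto t\cdot y$; $\mathcal{I}(Y)$ is the monoid of partial injections of $Y$. Axioms: (A) $\mathrm{dom}\varphi_t$, $\mathrm{ran}\varphi_t$ are order ideals of $Y$; (B) $\varphi_t$ is an order-isomorphism from $\mathrm{dom}\varphi_t$ onto $\mathrm{ran}\varphi_t$; (C) $\mathrm{dom}\varphi_t\neq\varnothing$. Reverse right partial action: $y\circ t$ is defined iff $y\in\mathrm{ran}\varphi_t$, with $y\circ t=\varphi_t^{-1}(y)$. $M(T,Y)=\{(y,t)\in Y\times T\colon y\circ t\text{ defined}\}$ with $(x,s)(y,t)=(s\cdot((x\circ s)\wedge y),st)$, $(y,t)^*=(y\circ t,1)$, $(y,t)^+=(y,1)$; it is a restriction semigroup with projections $\{(y,1)\}$. A restriction semigroup is $F$-restriction if each class of the least congruence $\sigma$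 identifying all projections has a maximum element in the natural order ($a\le b$ iff $a=eb$ for a projection $e$). The Munn semigroup $T_Y$ is the inverse semigroup of all order-isomorphisms between principal order ideals of $Y$. *)

From HB Require Import structures.
From mathcomp Require Import all_boot all_order.
From Stdlib Require Import ClassicalEpsilon.
Set Implicit Arguments. Unset Strict Implicit. Unset Printing Implicit Defensive.
Import Order.Theory.
Local Open Scope order_scope.

Definition is_monoid (T : Type) (mul : T -> T -> T) (one : T) : Prop :=
  [/\ forall a b c, mul a (mul b c) = mul (mul a b) c,
      forall a, mul one a = a & forall a, mul a one = a].

(* Partial actions of T on a meet semilattice Y, encoded as
   act t y = Some (t . y) when t . y is defined, None otherwise.
   phi_t is the partial injection  y |-> act t y.                      *)
Section PartialAction.
Context {d : Order.disp_t} {Y : meetSemilatticeType d} {T : Type}.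
Variables (mul : T -> T -> T) (one : T) (act : T -> Y -> option Y).

Definition in_dom (t : T) (y : Y) : Prop := exists z, act t y = Some z.
Definition in_ran (t : T) (y : Y) : Prop := exists x, act t x = Some y.

Definition left_partial_action : Prop :=
  (forall y, act one y = Some y) /\
  (forall s t y z w, act t y = Some z -> act s z = Some w ->
                     act (mul s t) y = Some w).

Definition order_ideal (P : Y -> Prop) : Prop :=
  forall x y, P y -> x <= y -> P x.

Definition axiomA : Prop :=
  forall t, order_ideal (in_dom t) /\ order_ideal (in_ran t).
(* (B) : phi_t is an order isomorphism dom phi_t -> ran phi_t
   (it is onto ran phi_t by definition of ran) *)
Definition order_iso_on (t : T) : Prop :=
  forall x y x' y', act t x = Some x' -> act t y = Some y' ->
                    (x <= y) = (x' <= y').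
Definition axiomB : Prop := forall t, order_iso_on t.
Definition axiomC : Prop := forall t, exists y, in_dom t y.

Definition principal_ideal (P : Y -> Prop) : Prop :=
  exists e : Y, forall y, P y <-> y <= e.

Definition in_Munn (t : T) : Prop :=
  principal_ideal (in_dom t) /\ principal_ideal (in_ran t) /\ order_iso_on t.

(* reverse right partial action: y o t = phi_t^{-1}(y) (meaningful when
   y \in ran phi_t; an arbitrary value otherwise) *)
Definition ract (y : Y) (t : T) : Y :=
  epsilon (inhabits y) (fun x => act t x = Some y).

Definition inM (a : Y * T) : Prop := in_ran a.2 a.1.

(* (x,s)(y,t) = (s . ((x o s) /\ y), st); the default value is never used
   on elements of M(T,Y) *)
Definition mulM (a b : Y * T) : Y * T :=
  (odflt b.1 (act a.2 (ract a.1 a.2 `&` b.1)), mul a.2 b.2).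

Definition projM (a : Y * T) : Prop := a.2 = one.

End PartialAction.

(* Generic notions for a semigroup S given as a subset inS of a type,
   with multiplication mul and set of projections proj.               *)
Section Restriction.
Variables (S : Type) (inS : S -> Prop) (mul : S -> S -> S) (proj : S -> Prop).

Definition nat_le (a b : S) : Prop := exists2 e, proj e & a = mul e b.

Definition congruence (R : S -> S -> Prop) : Prop :=
  [/\ forall a, inS a -> R a a,
      forall a b, R a b -> R b a,
      forall a b c, R a b -> R b c -> R a c &
      forall a b c, inS a -> inS b -> inS c -> R a b ->
        R (mul c a) (mul c b) /\ R (mul a c) (mul b c)].

Definition sigma (a b : S) : Prop :=
  inS a /\ inS b /\
  forall R, congruence R -> (forall e f, proj e -> proj f -> R e f) -> R a b.

Definition F_restriction : Prop :=
  forall a, inS a -> exists m, [/\ inS m, sigma a m &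
                                 forall b, sigma a b -> nat_le b m].

Definition has_identity : Prop :=
  exists2 u, inS u & forall a, inS a -> mul u a = a /\ mul a u = a.

Definition F_restriction_monoid : Prop := has_identity /\ F_restriction.

End Restriction.

(* The sigma-classes of M(T,Y) are exactly the fibres {(y,t) | y \in ran phi_t}
   over t \in T, and on a fibre the natural order is the order of Y on the
   first coordinate.  Hence every class has a maximum iff every ran phi_t is a
   principal ideal, which by (A) and (B) happens iff every dom phi_t is one.
   Since dom phi_1 = Y, this also gives Y a top element e, and (e,1) is the
   identity of M(T,Y). *)

From mathcomp Require Import all_boot all_order.
From Stdlib Require Import ClassicalEpsilon.
Import Order.Theory.
Local Open Scope order_scope.
Set Implicit Arguments. Unset Strict Implicit.

Section PrincipalIdeals.
Context {d : Order.disp_t} {Y : meetSemilatticeType d} {T : Type}.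
Variable act : T -> Y -> option Y.
Hypotheses (HA : axiomA act) (HB : axiomB act).

Lemma principal_dom_ran t :
  principal_ideal (in_dom act t) <-> principal_ideal (in_ran act t).
Proof.
split.
  case=> e De; have [r Her] : in_dom act t e by apply/De.
  exists r => y; split.
    case=> x Hxy; have Dx : in_dom act t x by exists y.
    by rewrite -(HB Hxy Her); apply/De.
  by move=> le_yr; apply: (proj2 (HA t) _ r) => //; exists e.
case=> r Rr; have [e Her] : in_ran act t r by apply/Rr.
exists e => y; split.
  case=> z Hyz; have Rz : in_ran act t z by exists y.
  by rewrite (HB Hyz Her); apply/Rr.
by move=> le_ye; apply: (proj1 (HA t) _ e) => //; exists r.
Qed.

Lemma principal_dom_Munn t :
  principal_ideal (in_dom act t) <-> in_Munn act t.
Proof.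
split; last by case.
by move=> Pd; split; [|split]; [| apply/principal_dom_ran | exact: HB].
Qed.

End PrincipalIdeals.

Section RestrictionMonoidM.
Context {d : Order.disp_t} {Y : meetSemilatticeType d} {T : Type}.
Variables (mul : T -> T -> T) (one : T) (act : T -> Y -> option Y).
Hypotheses (monoidT : is_monoid mul one)
           (actionT : left_partial_action mul one act)
           (HA : axiomA act).

Local Notation inM := (inM act).
Local Notation mulM := (mulM mul act).
Local Notation projM := (projM one).

Lemma act_ract t y : in_ran act t y -> act t (ract act y t) = Some y.
Proof. exact: epsilon_spec. Qed.

Lemma ract_one y : ract act y one = y.
Proof.
have [act1 _] := actionT.
by have := @act_ract one y; rewrite act1 => /(_ (ex_intro _ y (act1 y))) [].
Qed.

Lemma inM_proj y : inM (y, one).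
Proof. by exists y; case: actionT. Qed.

Lemma in_dom_ract_meet x s y : inM (x, s) -> in_dom act s (ract act x s `&` y).
Proof.
by move=> Mx; apply: (proj1 (HA s) _ (ract act x s)); [exists x; exact: act_ract | exact: leIl].
Qed.

Lemma inM_mulM a b : inM a -> inM b -> inM (mulM a b).
Proof.
case: a b => [x s] [y t] Mx Ry; rewrite /inM /=.
have [z Hz] := in_dom_ract_meet y Mx.
have [w Hw] : in_ran act t (ract act x s `&` y).
  by apply: (proj2 (HA t) _ y) => //; exact: leIr.
by rewrite Hz; exists w; exact: (proj2 actionT) Hw Hz.
Qed.

Lemma mulM_projl e a : inM a -> a.1 <= e -> mulM (e, one) a = a.
Proof.
case: a => [y t] /= _ le_ye; have [act1 _] := actionT; have [_ mul1 _] := monoidT.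
by rewrite /mulM /= ract_one act1 meet_r // mul1.
Qed.

Lemma sigmaE a b :
  sigma inM mulM projM a b <-> [/\ inM a, inM b & a.2 = b.2].
Proof.
have [_ _ mult1] := monoidT; split.
  case=> _ [_ sigma_ab]; apply: (sigma_ab (fun a b => [/\ inM a, inM b & a.2 = b.2])).
    split=> [c Mc | c e [] | c e f [? ? ->] [] | c e f Mc Me Mf [_ _ Ece]] //.
    by split; split; rewrite /= ?Ece //; apply: inM_mulM.
  by case=> [y s] [z t]; rewrite /projM /= => -> ->; split=> //; apply: inM_proj.
case: a b => [x s] [y t] [Mx My /= Est]; subst t.
split=> //; split=> // R [_ Rsym Rtrans Rcomp] Rproj.
(* (x,s) = (x,s)(x o s, 1) is R-related to (x,s)(y o s, 1) = (m,s), where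
   m = s . ((x o s) /\ (y o s)); symmetrically (y,s) is R-related to (m,s). *)
have Rxy : R (ract act x s, one) (ract act y s, one) by apply: Rproj.
have [Rx _] := Rcomp _ _ _ (inM_proj _) (inM_proj _) Mx Rxy.
have [Ry _] := Rcomp _ _ _ (inM_proj _) (inM_proj _) My (Rsym _ _ Rxy).
move: Rx Ry; rewrite /mulM /= mult1 !meetxx (act_ract Mx) (act_ract My) /=.
have [m Hm] := in_dom_ract_meet (ract act y s) Mx.
rewrite [ract act y s `&` _]meetC Hm /= => Rx Ry.
exact: Rtrans Rx (Rsym _ _ Ry).
Qed.

Lemma nat_leE a b : nat_le mulM projM a b <-> a.2 = b.2 /\ a.1 <= b.1.
Proof.
have [act1 _] := actionT; have [_ mul1 _] := monoidT; split.
  case=> [[f o]]; rewrite /projM /= => -> ->.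
  by rewrite /mulM /= ract_one act1 /= mul1; split => //; exact: leIr.
case: a b => [x s] [y t] /= [-> le_xy]; exists (x, one) => //.
by rewrite /mulM /= ract_one act1 /= mul1 meet_l.
Qed.

Lemma has_identityM :
  principal_ideal (in_dom act one) -> has_identity inM mulM.
Proof.
have [act1 _] := actionT; have [_ _ mulr1] := monoidT.
case=> e De; have le_e y : y <= e by apply/De; exists y; exact: act1.
exists (e, one); first exact: inM_proj.
case=> y t My; split; first exact: mulM_projl.
by rewrite /mulM /= meet_l // act_ract // mulr1.
Qed.

Lemma F_restrictionM_principal_ran :
  axiomC act -> F_restriction inM mulM projM ->
  forall t, principal_ideal (in_ran act t).
Proof.
move=> HC HF t; have [y [z Hyz]] := HC t.
have Mz : inM (z, t) by exists y.
have [[m s] [_ /sigmaE [_ Mm /= Ets] max_m]] := HF _ Mz; subst s.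
exists m => x; split=> [Rx | le_xm]; last exact: (proj2 (HA t) _ _ Mm).
have sigma_zx : sigma inM mulM projM (z, t) (x, t) by apply/sigmaE.
by have /nat_leE [] := max_m _ sigma_zx.
Qed.

Lemma principal_ran_F_restrictionM :
  (forall t, principal_ideal (in_ran act t)) -> F_restriction inM mulM projM.
Proof.
move=> Pran [y t] My; have [r Rr] := Pran t.
exists (r, t); split; first exact/Rr.
  by apply/sigmaE; split => //; apply/Rr.
move=> b /sigmaE [_ Mb /= Ebt]; apply/nat_leE => /=.
by split=> //; apply/Rr; rewrite Ebt.
Qed.

End RestrictionMonoidM.

Theorem lemma3p5 (d : Order.disp_t) (Y : meetSemilatticeType d) (T : Type)
  (mul : T -> T -> T) (one : T) (act : T -> Y -> option Y) :
  is_monoid mul one ->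
  left_partial_action mul one act ->
  axiomA act -> axiomB act -> axiomC act ->
  [/\ (F_restriction_monoid (inM act) (mulM mul act) (projM one)
         <-> forall t, principal_ideal (in_dom act t)),
      ((forall t, principal_ideal (in_dom act t)) <-> forall t, in_Munn act t) &
      (F_restriction_monoid (inM act) (mulM mul act) (projM one)
         <-> forall t, in_Munn act t)].
Proof.
move=> monoidT actionT HA HB HC.
have dom_Munn : (forall t, principal_ideal (in_dom act t)) <->
                forall t, in_Munn act t.
  by split=> P t; apply/(principal_dom_Munn HA HB).
have FM_dom : F_restriction_monoid (inM act) (mulM mul act) (projM one) <->
              forall t, principal_ideal (in_dom act t).
  split=> [[_ HF] t | Pdom].
    exact/(principal_dom_ran HA HB)/(F_restrictionM_principal_ran monoidT actionT HA).
  split; first exact: has_identityM monoidT actionT (Pdom one).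
  by apply: principal_ran_F_restrictionM => // t; apply/(principal_dom_ran HA HB).
by split=> //; split=> [/FM_dom/dom_Munn | /dom_Munn/FM_dom].
Qed.
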